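(* Let $H$ be a dense 3-graph and $T$ a triangle. Then $H$ is forbidden for $T$ if and only if $H$ is exactly forbidden for $T$.
   Context: A 3-graph is a 3-uniform hypergraph. For a 3-graph $G$ and a 3-graph $F$, $G$ is $F$-free if it has no (not necessarily induced) subhypergraph isomorphic to $F$. Let $T$ be a triangle with side lengths $a,b,c$, $\varepsilon>0$, $\varepsilon'=\varepsilon\min\{a,b,c\}$; a triangle $A'B'C'$ is $\varepsilon$-congruent to $T$ if there are $A,B,C\in\mathbb{R}^2$ with $ABC$ congruent to $T$ and $A',B',C'$ within distance $\varepsilon'$ of $A,B,C$ respectively. For finite $P\subseteq\mathbb{R}^2$, $\mathcal{H}(T,P,\varepsilon)$ is the 3-graph with vertex set $P$ whose edges are the triples forming triangles $\varepsilon$-congruent to $T$. A 3-graph $H$ is forbidden for $T$ if there exists $\varepsilon>0$ such that for every point set $P\subseteq\mathbb{R}^2$ with $|P|=|V(H)|$, $\mathcal{H}(T,P,\varepsilon)$ is $H$-free. A 3-graph $H$ with vertex set $[k]$ is exactly forbidden for $T$ if there do not exist points $p_1,\dots,p_k\in\mathbb{R}^2$ (not necessarily distinct) such that for every edge $xyz\in E(H)$ the triangle $p_xp_yp_z$ is congruent to $T$. A 3-graph $H$ on $k$ vertices is dense if there is an ordering $v_1,\dots,v_k$ of its vertices such that for every $3\le i\le k$ there is an edge of $H[\{v_1,\dots,v_i\}]$ containing $v_i$. *)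

From HB Require Import structures.
From mathcomp Require Import all_boot all_order all_algebra.
From mathcomp Require Import reals.
From mathcomp Require Import finmap.
Set Implicit Arguments. Unset Strict Implicit. Unset Printing Implicit Defensive.
Import Order.TTheory GRing.Theory Num.Theory.
Local Open Scope ring_scope.
Local Open Scope fset_scope.

Section Geo.
Variable R : realType.

Definition point := (R * R)%type.

Definition dist (p q : point) : R :=
  Num.sqrt ((p.1 - q.1) ^+ 2 + (p.2 - q.2) ^+ 2).

(* T is the triangle with side lengths a, b, c; a fixed labelling:
   |AB| = a, |BC| = b, |CA| = c. *)
Definition cong_ord (a b c : R) (A B C : point) : Prop :=
  dist A B = a /\ dist B C = b /\ dist C A = c.

(* triangle ABC (vertices unordered) is congruent to T (SSS) *)
Definition tri_cong (a b c : R) (A B C : point) : Prop :=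
  cong_ord a b c A B C \/ cong_ord a b c A C B \/ cong_ord a b c B A C \/
  cong_ord a b c B C A \/ cong_ord a b c C A B \/ cong_ord a b c C B A.

Definition eps_cong (a b c eps : R) (A' B' C' : point) : Prop :=
  let eps' := eps * Num.min a (Num.min b c) in
  exists A B C : point, tri_cong a b c A B C /\
    dist A' A <= eps' /\ dist B' B <= eps' /\ dist C' C <= eps'.

(* edges of H(T,P,eps): vertex set is (the finite type of elements of) P *)
Definition geom_edge (a b c eps : R) (P : {fset point}) (e : {set P}) : Prop :=
  exists p q r : P, [/\ p != q, q != r, p != r, e = [set p; q; r] &
    eps_cong a b c eps (val p) (val q) (val r)].

(* G (vertex type W, edge predicate EG) contains a (not necessarily induced)
   copy of H (vertex type V, edge set EH) *)
Definition contains_copy (V W : finType) (EH : {set {set V}})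
  (EG : {set W} -> Prop) : Prop :=
  exists f : V -> W, injective f /\ forall e, e \in EH -> EG (f @: e).

Definition forbidden (a b c : R) (V : finType) (E : {set {set V}}) : Prop :=
  exists eps : R, 0 < eps /\
    forall P : {fset point}, #|` P| = #|V| ->
      ~ contains_copy E (geom_edge a b c eps (P := P)).

Definition exactly_forbidden (a b c : R) (V : finType) (E : {set {set V}})
  : Prop :=
  ~ exists p : V -> point, forall e, e \in E ->
      exists x y z : V, e = [set x; y; z] /\ tri_cong a b c (p x) (p y) (p z).

End Geo.

Definition dense (V : finType) (E : {set {set V}}) : Prop :=
  exists s : seq V, [/\ uniq s, forall v, v \in s &
    forall (x0 : V) (i : nat), (2 <= i < size s)%N ->
      exists2 e, e \in E &
        nth x0 s i \in e /\
        e \subset [set x | (index x s <= i)%N]].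

From HB Require Import structures.
From mathcomp Require Import all_boot all_order all_algebra.
From mathcomp Require Import reals.
From mathcomp Require Import finmap.
From mathcomp Require Import ring lra zify.
From mathcomp Require Import boolp.
From mathcomp Require classical_sets topology normedtype sequences.

Set Implicit Arguments.
Unset Strict Implicit.

(* If p realizes H exactly (vertices may coincide), perturbing p into an injective map
   keeps every edge eps-congruent to T, so H embeds into H(T, P, eps) for the image P:
   a forbidden H is exactly forbidden.  Conversely, if H is not forbidden, then for every n
   there are positions G_n of the vertices in which every edge is 1/n-close to congruent
   to T.  Along the dense ordering every vertex shares an edge with an earlier one and
   edges have bounded diameter, so once the first vertex is moved to the origin the G_n
   stay in a bounded region.  By Bolzano-Weierstrass a subsequence converges, and its
   limit realizes H exactly. *)

Import Order.TTheory GRing.Theory Num.Theory.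
Local Open Scope ring_scope.

Section Plane.
Variable R : realType.
Implicit Types p q o : point R.

Lemma distC p q : dist p q = dist q p.
Proof. by rewrite /dist; congr Num.sqrt; ring. Qed.

Lemma distxx p : dist p p = 0.
Proof. by rewrite /dist !subrr expr0n /= addr0 sqrtr0. Qed.

Lemma ler_dist1 p q : `|p.1 - q.1| <= dist p q.
Proof. by rewrite -sqrtr_sqr ler_wsqrtr // lerDl sqr_ge0. Qed.

Lemma ler_dist2 p q : `|p.2 - q.2| <= dist p q.
Proof. by rewrite -sqrtr_sqr ler_wsqrtr // lerDr sqr_ge0. Qed.

Lemma dist_le_norm12 p q : dist p q <= `|p.1 - q.1| + `|p.2 - q.2|.
Proof.
rewrite -[_ + _]ger0_norm ?addr_ge0 // -sqrtr_sqr ler_wsqrtr //.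
rewrite [X in _ <= X]sqrrD !real_normK ?num_real //.
by have := normr_ge0 (p.1 - q.1); have := normr_ge0 (p.2 - q.2); nra.
Qed.

Lemma dist_triangle p q o : dist p o <= dist p q + dist q o.
Proof.
rewrite /dist.
set u1 := p.1 - q.1; set u2 := p.2 - q.2; set v1 := q.1 - o.1; set v2 := q.2 - o.2.
have -> : p.1 - o.1 = u1 + v1 by rewrite /u1 /v1; ring.
have -> : p.2 - o.2 = u2 + v2 by rewrite /u2 /v2; ring.
set A := u1 ^+ 2 + u2 ^+ 2; set B := v1 ^+ 2 + v2 ^+ 2.
have A_ge0 : 0 <= A by rewrite addr_ge0 ?sqr_ge0.
have B_ge0 : 0 <= B by rewrite addr_ge0 ?sqr_ge0.
have AB_ge0 : 0 <= Num.sqrt A * Num.sqrt B by rewrite mulr_ge0 ?sqrtr_ge0.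
have CS : u1 * v1 + u2 * v2 <= Num.sqrt A * Num.sqrt B.
  have : (u1 * v1 + u2 * v2) ^+ 2 <= (Num.sqrt A * Num.sqrt B) ^+ 2.
    rewrite exprMn !sqr_sqrtr // -subr_ge0.
    (* Lagrange's identity *)
    have -> : A * B - (u1 * v1 + u2 * v2) ^+ 2 = (u1 * v2 - u2 * v1) ^+ 2.
      by rewrite /A /B; ring.
    exact: sqr_ge0.
  nra.
rewrite -[Num.sqrt A + _]ger0_norm ?addr_ge0 ?sqrtr_ge0 // -sqrtr_sqr ler_wsqrtr //.
rewrite [X in _ <= X]sqrrD !sqr_sqrtr // /A /B; nra.
Qed.

Lemma ler_dist_dist p q p' q' : `|dist p' q' - dist p q| <= dist p p' + dist q q'.
Proof.
have h1 := dist_triangle p' p q'; have h2 := dist_triangle p q q'.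
have h3 := dist_triangle p p' q; have h4 := dist_triangle p' q' q.
rewrite (distC p' p) in h1; rewrite (distC q' q) in h4.
by rewrite ler_norml; apply/andP; split; lra.
Qed.

Lemma ler_dist_sub_move p q p' q' (e r d : R) :
  `|dist p q - e| <= r -> dist p p' <= d -> dist q q' <= d ->
  `|dist p' q' - e| <= r + 2 * d.
Proof.
move=> h dp dq; apply: le_trans (ler_distD (dist p q) _ _) _.
have := ler_dist_dist p q p' q'; lra.
Qed.

Definition translate o p : point R := (p.1 - o.1, p.2 - o.2).

Lemma dist_translate o p q : dist (translate o p) (translate o q) = dist p q.
Proof. by rewrite /dist /translate /=; congr Num.sqrt; ring. Qed.

End Plane.

Definition sym3 (T : Type) (P : T -> T -> T -> Prop) (x y z : T) : Prop :=
  P x y z \/ P x z y \/ P y x z \/ P y z x \/ P z x y \/ P z y x.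

Lemma sym3_rel (T U : Type) (P : T -> T -> T -> Prop) (Q : U -> U -> U -> Prop)
    (rel : T -> U -> Prop) x y z x' y' z' :
  (forall x y z x' y' z', rel x x' -> rel y y' -> rel z z' -> P x y z -> Q x' y' z') ->
  rel x x' -> rel y y' -> rel z z' -> sym3 P x y z -> sym3 Q x' y' z'.
Proof.
move=> PQ rx ry rz.
by case=> [h|[h|[h|[h|[h|h]]]]]; [left|right; left|do 2 right; left|
  do 3 right; left|do 4 right; left|do 5 right]; exact: (PQ _ _ _ _ _ _ _ _ _ h).
Qed.

Lemma sym3_impl (T : Type) (P Q : T -> T -> T -> Prop) x y z :
  (forall x y z, P x y z -> Q x y z) -> sym3 P x y z -> sym3 Q x y z.
Proof.
by move=> PQ; apply: (@sym3_rel _ _ P Q eq) => // ? ? ? ? ? ? -> -> ->; apply: PQ.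
Qed.

Lemma sym3_inv (T : Type) (P : T -> T -> T -> Prop) x y z :
  (forall x y z, P x y z -> P y x z) -> (forall x y z, P x y z -> P x z y) ->
  sym3 P x y z -> P x y z.
Proof. by move=> s12 s23; case=> [|[|[|[|[|]]]]]; auto. Qed.

Lemma card3P (T : finType) (e : {set T}) :
  #|e| = 3%N -> exists x y z, e = [set x; y; z].
Proof.
move=> e3; have /set0Pn[x xe] : e != set0 by rewrite -card_gt0 e3.
have /cards2P[y [z [_ eyz]]] : #|e :\ x| == 2%N.
  by move: e3; rewrite (cardsD1 x) xe add1n => -[->].
by exists x, y, z; rewrite -(setD1K xe) eyz setUA.
Qed.

Lemma card3_uniq (T : finType) (x y z : T) :
  #|[set x; y; z]| = 3%N -> uniq [:: x; y; z].
Proof.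
by move=> h; apply/card_uniqP; rewrite /= -h; apply: eq_card => v; rewrite !inE orbA.
Qed.

Lemma card3_neq (T : finType) (x y z : T) :
  #|[set x; y; z]| = 3%N -> [/\ x != y, y != z & x != z].
Proof. by move/card3_uniq; rewrite /= !inE negb_or => /and3P[/andP[-> ->] ->]. Qed.

Lemma sym3_relabel (T : finType) (P : T -> T -> T -> Prop) x y z x' y' z' :
  #|[set x; y; z]| = 3%N -> [set x; y; z] = [set x'; y'; z'] ->
  sym3 P x y z -> sym3 P x' y' z'.
Proof.
move=> card3 exyz; have := card3_uniq card3; rewrite exyz in card3.
have := card3_uniq card3.
have mem u : u \in [set x'; y'; z'] -> u \in [:: x; y; z].
  by rewrite -exyz !inE orbA.
have := mem x'; have := mem y'; have := mem z'; rewrite !inE !eqxx ?orbT.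
move=> /(_ isT)/or3P[]/eqP-> /(_ isT)/or3P[]/eqP-> /(_ isT)/or3P[]/eqP->;
  rewrite /= !inE ?eqxx ?orbT /= ?andbF // => _ _; rewrite /sym3; tauto.
Qed.

Section ArbitrarilySmall.
Variable R : realDomainType.
Implicit Types P Q : R -> Prop.

Definition arbitrarily_small P := forall r, 0 < r -> exists2 s, 0 < s <= r & P s.

Lemma arbitrarily_small_or P Q :
  arbitrarily_small (fun r => P r \/ Q r) -> arbitrarily_small P \/ arbitrarily_small Q.
Proof.
move=> PQ; apply: contrapT.
move=> /not_orP[/existsNP[r1 /not_implyP[r1_gt0 notP]] /existsNP[r2 /not_implyP[r2_gt0 notQ]]].
have [|s /andP[s_gt0 s_le] [Ps|Qs]] := PQ (Num.min r1 r2).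
- by rewrite lt_min r1_gt0 r2_gt0.
- apply: notP; exists s => //; rewrite s_gt0 /=.
  by apply: le_trans s_le _; rewrite ge_min lexx.
- apply: notQ; exists s => //; rewrite s_gt0 /=.
  by apply: le_trans s_le _; rewrite ge_min lexx orbT.
Qed.

Lemma sym3_arbitrarily_small (T : Type) (P : R -> T -> T -> T -> Prop) x y z :
  arbitrarily_small (fun r => sym3 (P r) x y z) ->
  sym3 (fun x y z => arbitrarily_small (fun r => P r x y z)) x y z.
Proof. by rewrite /sym3; do 5 (case/arbitrarily_small_or=> [?|h]; [by left|right; move: h]). Qed.

End ArbitrarilySmall.

Lemma eq0_norm_le_pos (R : numFieldType) (x : R) :
  (forall r, 0 < r -> `|x| <= r) -> x = 0.
Proof.
by move=> h; apply/eqP; rewrite -normr_le0; apply/ler_addgt0Pr => r /h; rewrite add0r.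
Qed.

Section ApproxCongruence.
Variables (R : realType) (a b c : R).
Implicit Types (A B C : point R) (r d : R).

Definition acong r A B C : Prop :=
  [/\ `|dist A B - a| <= r, `|dist B C - b| <= r & `|dist C A - c| <= r].

Definition atri r := sym3 (acong r).

Lemma acong_le r r' A B C : acong r A B C -> r <= r' -> acong r' A B C.
Proof. by move=> [h1 h2 h3] rr'; split; apply: le_trans _ rr'. Qed.

Lemma atri_le r r' A B C : atri r A B C -> r <= r' -> atri r' A B C.
Proof. by move=> T0 rr'; apply: sym3_impl T0 => X Y Z /acong_le; apply. Qed.

Lemma acong_move r d A B C A' B' C' :
  dist A A' <= d -> dist B B' <= d -> dist C C' <= d ->
  acong r A B C -> acong (r + 2 * d) A' B' C'.
Proof.
move=> dA dB dC [h1 h2 h3]; split.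
- exact: ler_dist_sub_move h1 dA dB.
- exact: ler_dist_sub_move h2 dB dC.
- exact: ler_dist_sub_move h3 dC dA.
Qed.

Lemma atri_move r d A B C A' B' C' :
  atri r A B C -> dist A A' <= d -> dist B B' <= d -> dist C C' <= d ->
  atri (r + 2 * d) A' B' C'.
Proof.
move=> T0 dA dB dC; move: dA dB dC T0.
apply: (@sym3_rel _ _ _ _ (fun X X' => dist X X' <= d)) => ? ? ? ? ? ? dX dY dZ.
exact: acong_move.
Qed.

Lemma atri_translate o r A B C :
  atri r A B C -> atri r (translate o A) (translate o B) (translate o C).
Proof.
apply: (@sym3_rel _ _ _ _ (fun X X' => X' = translate o X)) => // ? ? ? ? ? ? -> -> ->.
by case=> h1 h2 h3; split; rewrite dist_translate.
Qed.

Lemma tri_cong_atri A B C : tri_cong a b c A B C -> atri 0 A B C.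
Proof.
apply: sym3_impl => X Y Z [h1 [h2 h3]].
by rewrite /acong h1 h2 h3 !subrr normr0 lexx.
Qed.

Lemma eps_cong_atri eps A B C :
  eps_cong a b c eps A B C -> atri (2 * (eps * Num.min a (Num.min b c))) A B C.
Proof.
move=> [A0 [B0 [C0 [T0 [dA [dB dC]]]]]].
by rewrite -[X in atri X]add0r; apply: atri_move (tri_cong_atri T0) _ _ _; rewrite distC.
Qed.

Lemma acong_cong A B C :
  arbitrarily_small (fun r => acong r A B C) -> cong_ord a b c A B C.
Proof.
move=> small; have {}small r : 0 < r -> acong r A B C.
  by move=> /small[s /andP[_ sr] As]; apply: acong_le As sr.
by split; [|split]; apply/eqP; rewrite -subr_eq0; apply/eqP/eq0_norm_le_pos => r /small[].
Qed.

Lemma atri_tri_cong A B C :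
  (forall r, 0 < r -> atri r A B C) -> tri_cong a b c A B C.
Proof.
move=> T0; apply: sym3_impl acong_cong _; apply: sym3_arbitrarily_small => r r_gt0.
by exists r; rewrite ?r_gt0 ?lexx //; apply: T0.
Qed.

Lemma atri_diam r A B C :
  atri r A B C -> 0 <= a -> 0 <= b -> 0 <= c -> 0 <= r ->
  {in [:: A; B; C] &, forall X Y, dist X Y <= a + b + c + r}.
Proof.
move=> T0 a_ge0 b_ge0 c_ge0 r_ge0.
pose K := a + b + c + r; have K_ge0 : 0 <= K by rewrite !addr_ge0.
pose diam X Y Z := [/\ dist X Y <= K, dist Y Z <= K & dist Z X <= K].
have [dAB dBC dCA] : diam A B C.
  apply: (@sym3_inv _ diam) => [X Y Z [? ? ?]|X Y Z [? ? ?]|]; try by split; rewrite distC.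
  move: T0; apply: sym3_impl => X Y Z [].
  by rewrite /diam /K !ler_norml => /andP[_ ?] /andP[_ ?] /andP[_ ?]; split; lra.
move=> X Y; rewrite !inE => /or3P[]/eqP-> /or3P[]/eqP->; rewrite ?distxx //.
all: by rewrite distC.
Qed.

End ApproxCongruence.

Lemma perturb_injective (R : realType) (V : finType) (p : V -> point R) (d : R) :
  0 < d -> exists q : V -> point R, injective q /\ forall v, dist (q v) (p v) <= d.
Proof.
move=> d_gt0.
pose gap := \big[Num.min/1]_(vw : V * V | (p vw.1).1 != (p vw.2).1)
              `|(p vw.1).1 - (p vw.2).1|.
have gap_gt0 : 0 < gap.
  apply: (big_ind (fun x => 0 < x)) => // [x y x_gt0 y_gt0|vw ne].
    by rewrite lt_min x_gt0 y_gt0.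
  by rewrite normr_gt0 subr_eq0.
have gap_le v w : (p v).1 != (p w).1 -> gap <= `|(p v).1 - (p w).1|.
  by move=> ne; rewrite /gap (bigD1 (v, w)) //= ge_min lexx.
pose g := Num.min d gap; have g_gt0 : 0 < g by rewrite lt_min d_gt0 gap_gt0.
(* Shifts by distinct multiples of t, all below the smallest nonzero gap, cannot
   close a gap and separate the points sharing a first coordinate. *)
pose t := g / #|V|.+1%:R; pose shift (v : V) := t * (enum_rank v)%:R.
have t_gt0 : 0 < t by rewrite divr_gt0 ?ltr0Sn.
have shift_bd v : 0 <= shift v < g.
  rewrite /shift mulr_ge0 ?ler0n ?ltW //= /t mulrAC ltr_pdivrMr ?ltr0Sn //.
  by rewrite ltr_pM2l // ltr_nat ltnS ltnW ?ltn_ord.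
exists (fun v => ((p v).1 + shift v, (p v).2)); split.
  move=> v w /(congr1 fst) /= eq1.
  have [e1|ne] := eqVneq (p v).1 (p w).1.
    move: eq1; rewrite e1 /shift => /addrI /(mulfI (lt0r_neq0 t_gt0)) /eqP.
    by rewrite eqr_nat => /eqP/ord_inj/enum_rank_inj.
  exfalso; have := gap_le v w ne.
  have -> : (p v).1 - (p w).1 = shift w - shift v by lra.
  have g_le : g <= gap by rewrite /g ge_min lexx orbT.
  have /andP[? ?] := shift_bd v; have /andP[? ?] := shift_bd w.
  by rewrite ler_normr => /orP[] ?; lra.
move=> v; have /andP[s_ge0 s_lt] := shift_bd v.
rewrite /dist /= addrAC !subrr add0r expr0n /= addr0 sqrtr_sqr ger0_norm //.
by apply/ltW/(lt_le_trans s_lt); rewrite /g ge_min lexx.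
Qed.

Lemma fset_of_injective (K : choiceType) (V : finType) (q : V -> K) :
  injective q -> exists (P : {fset K}) (f : V -> P),
    [/\ #|` P| = #|V|, injective f & forall v, val (f v) = q v].
Proof.
move=> q_inj; pose P := seq_fset tt (map q (enum V)).
have qP v : q v \in P by rewrite seq_fsetE map_f ?mem_enum.
exists P, (fun v => FSetSub (qP v)); split=> //.
- rewrite size_seq_fset undup_id; last by rewrite map_inj_uniq ?enum_uniq.
  by rewrite size_map cardE.
- by move=> v w /(congr1 val) /q_inj.
Qed.

(* The analysis library is imported only here: its [point] would shadow the plane's. *)
Module Subseq.
Import classical_sets topology normedtype sequences.
Import numFieldNormedType.Exports.
Local Open Scope ring_scope.

Lemma bounded_subseq_cvg (R : realType) (u : nat -> R) (M : R) :
  (forall n, `|u n| <= M) ->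
  exists (phi : nat -> nat) (l : R), (forall n, (n <= phi n)%N) /\
    forall r, 0 < r -> exists N, forall n, (N <= n)%N -> `|u (phi n) - l| < r.
Proof.
move=> uM; have u_bd : bounded_fun u.
  exists M; split; first exact: num_real.
  by move=> x Mx n _; apply: le_trans (uM n) _; apply: ltW.
have [phi phi_incr u_cvg] := bolzano_weierstrass u_bd.
set l := lim _ in u_cvg.
exists phi, l; split.
  elim=> [|n IH] //; apply: leq_ltn_trans IH _.
  by rewrite ltnNge; have := phi_incr n.+1 n; rewrite !leEnat => ->; rewrite ltnn.
move=> r r_gt0; move/cvgrPdist_lt: u_cvg => /(_ r r_gt0)[N _ HN].
by exists N => n Nn; rewrite distrC; apply: HN.
Qed.

End Subseq.

Lemma bounded_family_subseq_cvg (R : realType) (T : finType) (u : T -> nat -> R) (M : R) :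
  (forall i n, `|u i n| <= M) ->
  exists (phi : nat -> nat) (l : T -> R), (forall n, (n <= phi n)%N) /\
    forall r, 0 < r -> exists N, forall n, (N <= n)%N -> forall i, `|u i (phi n) - l i| < r.
Proof.
move=> uM.
have cvg_on (s : seq T) : exists (phi : nat -> nat) (l : T -> R),
    (forall n, (n <= phi n)%N) /\ forall r, 0 < r -> exists N, forall n, (N <= n)%N ->
    forall i, i \in s -> `|u i (phi n) - l i| < r.
  elim: s => [|i s [phi [l [phi_ge cvg]]]].
    by exists id, (fun=> 0); split=> // r _; exists 0%N => ? ? ?; rewrite in_nil.
  have [psi [li [psi_ge cvgi]]] := Subseq.bounded_subseq_cvg (fun n => uM i (phi n)).
  exists (phi \o psi), (fun j => if j == i then li else l j); split.
    by move=> n /=; apply: leq_trans (psi_ge n) (phi_ge _).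
  move=> r r_gt0; have [N1 HN1] := cvg r r_gt0; have [N2 HN2] := cvgi r r_gt0.
  exists (maxn N1 N2) => n; rewrite geq_max => /andP[N1n N2n] j; rewrite inE.
  case: eqVneq => [-> _|_ /= js]; first exact: HN2.
  exact: HN1 _ (leq_trans N1n (psi_ge n)) _ js.
have [phi [l [phi_ge cvg]]] := cvg_on (enum T).
exists phi, l; split=> // r /cvg[N HN]; exists N => n Nn i.
by apply: HN; rewrite ?mem_enum.
Qed.

Lemma bounded_points_cluster (R : realType) (T : finType) (u : nat -> T -> point R) (M : R) :
  (forall n i, `|(u n i).1| <= M /\ `|(u n i).2| <= M) ->
  exists L : T -> point R, forall r, 0 < r -> forall N,
    exists2 n, (N <= n)%N & forall i, dist (u n i) (L i) <= r.
Proof.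
move=> uM.
pose coord (ib : T * bool) n := if ib.2 then (u n ib.1).1 else (u n ib.1).2.
have coordM ib n : `|coord ib n| <= M.
  by rewrite /coord; case: (uM n ib.1) => ? ?; case: ib.2.
have [phi [l [phi_ge cvg]]] := bounded_family_subseq_cvg coordM.
exists (fun i => (l (i, true), l (i, false))) => r r_gt0 N.
have [N' HN'] := cvg (r / 2) (divr_gt0 r_gt0 (ltr0Sn _ 1)).
exists (phi (maxn N N')); first exact: leq_trans (leq_maxl N N') (phi_ge _).
move=> i; apply: le_trans (dist_le_norm12 _ _) _.
have := HN' _ (leq_maxr N N') (i, true); have := HN' _ (leq_maxr N N') (i, false).
rewrite /coord /=; lra.
Qed.

Lemma dist_le_rank (R : realType) (V : finType) (G : V -> point R) (rank : V -> nat)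
    (v0 : V) (K : R) :
  0 <= K -> (forall v, v != v0 -> exists2 w, (rank w < rank v)%N & dist (G v) (G w) <= K) ->
  forall v, dist (G v) (G v0) <= (rank v)%:R * K.
Proof.
move=> K_ge0 back v; have [n] := ubnP (rank v); elim: n v => // n IH v.
rewrite ltnS => rv_le.
have [->|/back[w rw_lt dvw]] := eqVneq v v0; first by rewrite distxx mulr_ge0 ?ler0n.
have step : (rank w)%:R * K + K <= (rank v)%:R * K.
  by rewrite -[X in _ + X]mul1r -mulrDl natr1; apply: ler_wpM2r; rewrite // ler_nat.
have := IH w (leq_trans rw_lt rv_le); have := dist_triangle (G v) (G w) (G v0); lra.
Qed.

Lemma dense_rank (V : finType) (E : {set {set V}}) :
  (forall e, e \in E -> #|e| = 3%N) -> dense E -> E != set0 ->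
  exists (v0 : V) (rank : V -> nat), (forall v, (rank v < #|V|)%N) /\
    forall v, v != v0 ->
      exists2 e, e \in E & v \in e /\ exists2 w, w \in e & (rank w < rank v)%N.
Proof.
move=> E3 [s [s_uniq s_all back]] /set0Pn[e0 e0E].
have [x0 _] := card3P (E3 _ e0E).
have size_s : size s = #|V|.
  rewrite cardT; apply/perm_size/uniq_perm; rewrite ?enum_uniq // => v.
  by rewrite mem_enum s_all.
have V_ge3 : (3 <= #|V|)%N by rewrite -(E3 _ e0E) max_card.
exists (nth x0 s 0), (index^~ s); split=> [v|v v_neq0].
  by rewrite -size_s index_mem s_all.
set i := index v s.
have i_gt0 : (0 < i)%N.
  rewrite lt0n; apply/eqP => i0; move/eqP: v_neq0; apply.
  by rewrite -(nth_index x0 (s_all v)) -/i i0.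
(* For i = 1, density at index 2 gives an edge with vertices among v_0, v_1, v_2. *)
have k_lt : (maxn i 2 < size s)%N by rewrite gtn_max /i index_mem s_all size_s.
have k_range : (2 <= maxn i 2 < size s)%N by rewrite leq_maxr k_lt.
have [e eE [ke e_le]] := back x0 (maxn i 2) k_range.
have [x [y [z exyz]]] := card3P (E3 _ eE).
have mem_e u : (u \in e) = (u \in [:: x; y; z]) by rewrite exyz !inE orbA.
pose I := [seq index u s | u <- [:: x; y; z]].
have I_uniq : uniq I.
  have xyz_uniq : uniq [:: x; y; z] by rewrite card3_uniq // -exyz E3.
  rewrite /I map_inj_in_uniq // => u u' _ _ eq_index.
  by rewrite -(nth_index x0 (s_all u)) eq_index nth_index ?s_all.
have k_in : maxn i 2 \in I.
  by apply/mapP; exists (nth x0 s (maxn i 2)); rewrite ?index_uniq // -mem_e.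
have I_le : all (leq^~ (maxn i 2)) I.
  apply/allP => _ /mapP[u u_in ->].
  by move: (subsetP e_le u); rewrite inE mem_e => /(_ u_in).
have [/mapP[u u_in iu] /hasP[_ /mapP[w w_in ->] wi]] : i \in I /\ has (ltn^~ i) I.
  by move: I_uniq k_in I_le i_gt0; rewrite /I /= !inE; lia.
exists e => //; split; last by exists w; rewrite ?mem_e.
by rewrite -(nth_index x0 (s_all v)) -/i iu nth_index ?mem_e // s_all.
Qed.

Section Realizations.
Variables (R : realType) (a b c : R) (V : finType) (E : {set {set V}}).
Hypotheses (a_gt0 : 0 < a) (b_gt0 : 0 < b) (c_gt0 : 0 < c).
Hypothesis E3 : forall e, e \in E -> #|e| = 3%N.

Let m := Num.min a (Num.min b c).
Let m_gt0 : 0 < m. Proof. by rewrite !lt_min a_gt0 b_gt0 c_gt0. Qed.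

Lemma forbidden_exactly_forbidden : forbidden a b c E -> exactly_forbidden a b c E.
Proof.
move=> [eps [eps_gt0 noCopy]] [p real_p].
have [q [q_inj q_near]] := perturb_injective p (mulr_gt0 eps_gt0 m_gt0).
have [P [f [cardP f_inj fq]]] := fset_of_injective q_inj.
apply: (noCopy P cardP); exists f; split=> // e eE.
have [x [y [z [exyz Txyz]]]] := real_p e eE.
have [nxy nyz nxz] : [/\ x != y, y != z & x != z].
  by apply: card3_neq; rewrite -exyz E3.
exists (f x), (f y), (f z); rewrite !(inj_eq f_inj) exyz !imsetU !imset_set1.
split=> //; exists (p x), (p y), (p z); split=> //; rewrite !fq.
by split; [|split]; apply: q_near.
Qed.

Definition approx_realization r (G : V -> point R) : Prop :=
  forall e, e \in E -> forall x y z, e = [set x; y; z] -> atri a b c r (G x) (G y) (G z).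

Lemma not_forbidden_approx_realization :
  ~ forbidden a b c E -> forall r, 0 < r -> exists G, approx_realization r G.
Proof.
move=> notF r r_gt0; apply: contrapT => noG; apply: notF.
exists (r / (2 * m)); split=> [|P _ [f [f_inj copy]]].
  by rewrite divr_gt0 ?mulr_gt0 ?m_gt0 ?ltr0Sn.
apply: noG; exists (fun v => val (f v)) => e eE x y z exyz.
have [p [q [s [_ _ _ fe Tpqs]]]] := copy e eE.
have fe' : f @: e = [set f x; f y; f z] by rewrite exyz !imsetU !imset_set1.
have card_pqs : #|[set p; q; s]| = 3%N by rewrite -fe card_imset // E3.
have r_eq : 2 * (r / (2 * m) * m) = r by field; exact: lt0r_neq0 m_gt0.
have := eps_cong_atri Tpqs; rewrite -/m r_eq => T_pqs.
exact: (sym3_relabel (P := fun u v w : P => acong a b c r (val u) (val v) (val w))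
  card_pqs (etrans (esym fe) fe') T_pqs).
Qed.

Lemma approx_realization_translate r G o :
  approx_realization r G -> approx_realization r (fun v => translate o (G v)).
Proof. by move=> HG e eE x y z exyz; apply: atri_translate _ (HG e eE x y z exyz). Qed.

Lemma approx_realization_diam r G e u w :
  approx_realization r G -> 0 <= r -> e \in E -> u \in e -> w \in e ->
  dist (G u) (G w) <= a + b + c + r.
Proof.
move=> HG r_ge0 eE; have [x [y [z exyz]]] := card3P (E3 eE).
have mem v : v \in e -> G v \in [:: G x; G y; G z].
  by rewrite exyz !inE -orbA => /or3P[]/eqP->; rewrite eqxx ?orbT.
move=> /mem Gu /mem Gw.
by apply: (atri_diam (HG e eE x y z exyz)); rewrite // ltW.
Qed.

Lemma approx_realization_lim (G : nat -> V -> point R) (L : V -> point R) :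
  (forall n, approx_realization n.+1%:R^-1 (G n)) ->
  (forall r, 0 < r -> forall N, exists2 n, (N <= n)%N & forall v, dist (G n v) (L v) <= r) ->
  forall r, 0 < r -> approx_realization r L.
Proof.
move=> HG GL r r_gt0 e eE x y z exyz.
have r2_ge0 : 0 <= (r / 2)^-1 by rewrite invr_ge0 divr_ge0 ?ler0n // ltW.
pose N := Num.Def.archi_bound (r / 2)^-1.
have [n Nn near] := GL (r / 4) (divr_gt0 r_gt0 (ltr0Sn _ 3)) N.
have n_large : n.+1%:R^-1 <= r / 2.
  rewrite -[r / 2]invrK lef_pV2 ?posrE ?invr_gt0 ?divr_gt0 ?ltr0Sn //.
  apply/ltW/(lt_le_trans (archi_boundP r2_ge0)).
  by rewrite ler_nat; apply: leqW.
apply: atri_le (atri_move (HG n e eE x y z exyz) (near x) (near y) (near z)) _.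
have -> : 2 * (r / 4) = r / 2 by field.
by rewrite [X in _ <= X](splitr r) lerD2r.
Qed.

Lemma approx_realization_exact (L : V -> point R) :
  (forall r, 0 < r -> approx_realization r L) ->
  forall e, e \in E -> exists x y z, e = [set x; y; z] /\ tri_cong a b c (L x) (L y) (L z).
Proof.
move=> HL e eE; have [x [y [z exyz]]] := card3P (E3 eE).
by exists x, y, z; split=> //; apply: atri_tri_cong => r /HL/(_ e eE x y z exyz).
Qed.

Lemma exactly_forbidden_forbidden :
  dense E -> exactly_forbidden a b c E -> forbidden a b c E.
Proof.
move=> E_dense realizable; apply: contrapT => notF; apply: realizable.
have [->|E_neq0] := eqVneq E set0; first by exists (fun=> (0, 0)) => e; rewrite inE.
have /choice[G HG] : forall n, exists G, approx_realization n.+1%:R^-1 G.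
  by move=> n; apply: not_forbidden_approx_realization; rewrite ?invr_gt0 ?ltr0Sn.
have [v0 [rank [rank_lt back]]] := dense_rank E3 E_dense E_neq0.
pose K := a + b + c + 1; have K_gt0 : 0 < K by rewrite !addr_gt0.
have edge_le n v : v != v0 -> exists2 w, (rank w < rank v)%N & dist (G n v) (G n w) <= K.
  move=> /back[e eE [ve [w we rw_lt]]]; exists w => //.
  have inv_ge0 : 0 <= n.+1%:R^-1 :> R by rewrite invr_ge0 ler0n.
  apply: le_trans (approx_realization_diam (HG n) inv_ge0 eE ve we) _.
  by rewrite /K lerD2l invf_le1 ?ler1n ?ltr0Sn.
have dist_v0 n v : dist (G n v) (G n v0) <= #|V|%:R * K.
  apply: le_trans (dist_le_rank (ltW K_gt0) (edge_le n) v) _.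
  by rewrite ler_pM2r // ler_nat ltnW ?rank_lt.
pose G' n v := translate (G n v0) (G n v).
have G'_bd n v : `|(G' n v).1| <= #|V|%:R * K /\ `|(G' n v).2| <= #|V|%:R * K.
  by split; apply: le_trans _ (dist_v0 n v); [apply: ler_dist1 | apply: ler_dist2].
have [L HL] := bounded_points_cluster G'_bd.
exists L; apply: approx_realization_exact.
apply: (approx_realization_lim _ HL) => n.
exact: approx_realization_translate _ (HG n).
Qed.

End Realizations.

Theorem lemma2p1 (R : realType) (a b c : R) (V : finType) (E : {set {set V}})
  (Ha : 0 < a) (Hb : 0 < b) (Hc : 0 < c)
  (Hab : c < a + b) (Hbc : a < b + c) (Hca : b < c + a)
  (HE : forall e, e \in E -> #|e| = 3%N)
  (Hdense : dense E) :
  forbidden a b c E <-> exactly_forbidden a b c E.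
Proof.
split; first exact: forbidden_exactly_forbidden Ha Hb Hc HE.
exact: exactly_forbidden_forbidden Ha Hb Hc HE Hdense.
Qed.
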